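(* Let $P=P_1\cdots P_p$ and $T=T_1\cdots T_t$ be strings over a finite alphabet $\Sigma$, and let $R_U^j,R_M^j$ be the vectors computed by the GSM recurrence described in the context. For every $j\in\{1,\dots,t\}$ we have $(R_U^j)_p=1$ or $(R_M^j)_p=1$ if and only if $j\ge p$ and $P$ swap matches $T$ at location $j-p+1$. Equivalently, the GSM algorithm, which at step $j$ reports a match at position $j-p+1$ exactly when $(R_U^j)_p=1$ or $(R_M^j)_p=1$, reports precisely all locations at which $P$ swap matches $T$.
   Context: Strings: for a string $S$, $S_i$ is its $i$-th symbol and $S_{[i,j]}=S_iS_{i+1}\cdots S_j$. A swap permutation for a string $S$ of length $n$ is a permutation $\pi$ of $\{1,\dots,n\}$ such that (i) if $\pi(i)=j$ then $\pi(j)=i$; (ii) $\pi(i)\in\{i-1,i,i+1\}$ for all $i$; (iii) if $\pi(i)\neq i$ then $S_{\pi(i)}\neq S_i$. The swapped version is $\pi(S)=S_{\pi(1)}S_{\pi(2)}\cdots S_{\pi(n)}$. The pattern $P$ swap matches the text $T$ at location $i$ if there is a swap permutation $\pi$ for $P$ with $\pi(P)=T_{[i,i+p-1]}$. Bit vectors: all vectors below are elements of $\{0,1\}^p$ with entries indexed $1,\dots,p$; $\mid$ and $\&$ are bitwise OR and AND. $\mathit{LShift}(x)_1=0$ and $\mathit{LShift}(x)_i=x_{i-1}$ for $2\le i\le p$; $\mathit{RShift}(x)_i=x_{i+1}$ for $1\le i\le p-1$ and $\mathit{RShift}(x)_p=0$; $\mathit{LSO}(x)=\mathit{LShift}(x)\mid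 e_1$, where $e_1$ has a $1$ in entry $1$ and $0$ elsewhere. Masks: for $x\in\Sigma$, $D^x_i=1$ iff $P_i=x$. GSM recurrence: $R_U^0=R_M^0=R_D^0=0^p$, and for $j=1,\dots,t$: $R_U'^{\,j}=\mathit{LSO}(R_D^{j-1})$, $R_M'^{\,j}=R_D'^{\,j}=\mathit{LSO}(R_M^{j-1}\mid R_U^{j-1})$, $R_U^{j}=R_U'^{\,j}\ \&\ \mathit{LShift}(D^{T_j})$, $R_M^{j}=R_M'^{\,j}\ \&\ D^{T_j}$, $R_D^{j}=R_D'^{\,j}\ \&\ \mathit{RShift}(D^{T_j})$. *)

From mathcomp Require Import all_boot all_fingroup.
Set Implicit Arguments. Unset Strict Implicit. Unset Printing Implicit Defensive.

Section Defs.
Variable Sigma : finType.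

(* A string S is a [seq Sigma]; positions are 0-based ordinals k : 'I_(size S),
   position k corresponding to the paper's 1-based index k+1. *)
Definition sym (S : seq Sigma) (k : 'I_(size S)) : Sigma := tnth (in_tuple S) k.

Definition is_swap_perm (S : seq Sigma) (pi : {perm 'I_(size S)}) : Prop :=
  (forall k, pi (pi k) = k) /\
  (forall k : 'I_(size S), (pi k : nat) \in [:: k.-1; (k : nat); k.+1]) /\
  (forall k, pi k != k -> sym (pi k) != sym k).

Definition swapped (S : seq Sigma) (pi : {perm 'I_(size S)}) : seq Sigma :=
  [seq sym (pi k) | k <- enum 'I_(size S)].

(* P swap matches T at (1-based) location i : pi(P) = T_[i, i+p-1]. *)
Definition swap_matches (P T : seq Sigma) (i : nat) : Prop :=
  0 < i /\ i + size P - 1 <= size T /\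
  exists pi : {perm 'I_(size P)},
    is_swap_perm pi /\ swapped pi = take (size P) (drop i.-1 T).

(* A bit vector is a function nat -> bool; only entries 1..p are meaningful
   (all operations below produce 0 outside 1..p). *)
Definition bitvec := nat -> bool.
Variable p : nat.
Definition bzero : bitvec := fun _ => false.
Definition bor (x y : bitvec) : bitvec := fun i => x i || y i.
Definition band (x y : bitvec) : bitvec := fun i => x i && y i.
Definition LShift (x : bitvec) : bitvec := fun i => (2 <= i <= p) && x i.-1.
Definition RShift (x : bitvec) : bitvec := fun i => (1 <= i <= p.-1) && x i.+1.
Definition e1 : bitvec := fun i => (i == 1) && (1 <= p).
Definition LSO (x : bitvec) : bitvec := bor (LShift x) e1.
End Defs.

Definition mask (Sigma : finType) (P : seq Sigma) (x : Sigma) : bitvec :=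
  fun i => (1 <= i <= size P) && (nth x P i.-1 == x).

Definition gsm_step (Sigma : finType) (P : seq Sigma)
    (R : bitvec * bitvec * bitvec) (c : Sigma) : bitvec * bitvec * bitvec :=
  let p := size P in
  let: (RU, RM, RD) := R in
  let RU' := LSO p RD in
  let RM' := LSO p (bor RM RU) in
  let RD' := LSO p (bor RM RU) in
  let D := mask P c in
  (band RU' (LShift p D), band RM' D, band RD' (RShift p D)).

Definition gsm_state (Sigma : finType) (P T : seq Sigma) (j : nat) :=
  foldl (gsm_step P) (bzero, bzero, bzero) (take j T).

Definition RU (Sigma : finType) (P T : seq Sigma) (j : nat) : bitvec :=
  (gsm_state P T j).1.1.
Definition RM (Sigma : finType) (P T : seq Sigma) (j : nat) : bitvec :=
  (gsm_state P T j).1.2.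
Definition RD (Sigma : finType) (P T : seq Sigma) (j : nat) : bitvec :=
  (gsm_state P T j).2.

From Pilot Require Import Defs.
From mathcomp Require Import all_boot all_fingroup.
From mathcomp Require Import zify.

(* Since a swap
   permutation is a product of disjoint adjacent transpositions, the prefix
   P_1..P_i swap matches the i symbols of T ending at T_j iff either P_i = T_j
   and P_1..P_(i-1) matches ending at T_(j-1), or P_(i-1) P_i = T_j T_(j-1) and
   P_1..P_(i-2) matches ending at T_(j-2).  By induction on j, (R_M^j)_i records
   the first alternative, (R_U^j)_i the second, and (R_D^j)_i that P_1..P_(i-1)
   matches ending at T_(j-1) while P_(i+1) = T_j, i.e. a swap of P_i and
   P_(i+1) has been started.  At i = p the reported bit is thus exactly a swap
   match of P with the window ending at T_j. *)

Set Implicit Arguments.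
Unset Strict Implicit.
Unset Printing Implicit Defensive.

Section SwapMatching.
Variables (Sigma : finType) (P T : seq Sigma) (x0 : Sigma).
Local Notation p := (size P).
Local Notation PP k := (nth x0 P k).
Local Notation TT k := (nth x0 T k).

(* Indices are 0-based: the first i symbols of P against T_[j-i, j). *)
Fixpoint swap_prefix (i j : nat) : bool :=
  match i with
  | 0 => true
  | k.+1 => ((0 < j) && (PP k == TT j.-1) && swap_prefix k j.-1)
      || match k with 0 => false | k'.+1 =>
          (1 < j) && (PP k' == TT j.-1) && (PP k == TT j.-2) && swap_prefix k' j.-2 end
  end.

Lemma swap_prefix_fixed i j : PP i = TT j -> swap_prefix i j -> swap_prefix i.+1 j.+1.
Proof. by move=> e H; apply/orP; left; rewrite /= e eqxx; exact: H. Qed.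

Lemma swap_prefix_swapped i j : PP i = TT j.+1 -> PP i.+1 = TT j ->
  swap_prefix i j -> swap_prefix i.+2 j.+2.
Proof. by move=> e1 e2 H; apply/orP; right; rewrite /= e1 e2 !eqxx; exact: H. Qed.

Definition fixed_end (j i : nat) : bool :=
  (1 <= i <= p) && (0 < j) && (PP i.-1 == TT j.-1) && swap_prefix i.-1 j.-1.

Definition swapped_end (j i : nat) : bool :=
  (2 <= i <= p) && (1 < j) && (PP i.-2 == TT j.-1) && (PP i.-1 == TT j.-2)
  && swap_prefix i.-2 j.-2.

Definition pending_swap (j i : nat) : bool :=
  (1 <= i < p) && (0 < j) && (PP i == TT j.-1) && swap_prefix i.-1 j.-1.

Definition gsm_spec (j : nat) (R : bitvec * bitvec * bitvec) : Prop :=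
  [/\ R.1.1 =1 swapped_end j, R.1.2 =1 fixed_end j & R.2 =1 pending_swap j].

Lemma swap_prefixE j i : i <= p ->
  swap_prefix i j = (i == 0) || fixed_end j i || swapped_end j i.
Proof.
rewrite /fixed_end /swapped_end.
by case: i => [|[|i]] hi //=; rewrite hi ?andbT ?orbF.
Qed.

Lemma maskE (c : Sigma) (i : nat) : Defs.mask P c i = (1 <= i <= p) && (PP i.-1 == c).
Proof.
rewrite /Defs.mask; case: (boolP (1 <= i <= p)) => //= /andP [h1 h2].
by rewrite (set_nth_default x0) //; lia.
Qed.

Lemma LSO_swap_prefix j R : gsm_spec j R ->
  forall k, LSO p (bor R.1.2 R.1.1) k.+1 = (k < p) && swap_prefix k j.
Proof.
case=> hU hM _ k; rewrite /LSO /bor /LShift /e1 /= hU hM.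
case: k => [|k]; first by rewrite /= andbT.
case: (ltnP k.+1 p) => hk; last by rewrite !andbF.
by rewrite swap_prefixE ?(ltnW hk) // orbF.
Qed.

Lemma gsm_step_spec j R : gsm_spec j R -> gsm_spec j.+1 (gsm_step P R (TT j)).
Proof.
move=> hR; have hLSO := LSO_swap_prefix hR; case: hR => hU hM hD.
case: R hU hM hD hLSO => [[ru rm] rd] /= hU hM hD hLSO.
split=> [[|k]|[|k]|[|k]] /=; rewrite /band ?maskE ?andbF //.
- rewrite /LSO /bor /LShift /RShift /e1 maskE hD /swapped_end /pending_swap /=.
  case: k => [|k] /=; first by rewrite !andbF.
  case: (ltnP k.+1 p) => hk; rewrite ?andbF // (ltnW hk) /= orbF.
  by case: (PP k == TT j); rewrite ?andbT ?andbF.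
- rewrite hLSO /fixed_end /= andbT.
  by case: (k < p); rewrite //= andbC.
- rewrite hLSO /pending_swap /RShift maskE /=.
  have -> : (k < p.-1) = (k.+1 < p) by lia.
  case: (ltnP k.+1 p) => hk; rewrite ?andbF // (ltnW hk) /=.
  by rewrite andbC.
Qed.

Lemma gsm_state_spec j : j <= size T -> gsm_spec j (gsm_state P T j).
Proof.
elim: j => [_|j IH hj].
  by split=> i; rewrite /gsm_state take0 /= /swapped_end /fixed_end /pending_swap !andbF.
rewrite /gsm_state (take_nth x0 hj) foldl_rcons.
exact: gsm_step_spec (IH (ltnW hj)).
Qed.

Lemma gsm_report_swap_prefix j : 0 < p -> j <= size T ->
  (RU P T j p || RM P T j p) = swap_prefix p j.
Proof.
move=> hp hj; have [hU hM _] := gsm_state_spec hj.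
by rewrite /RU /RM hU hM swap_prefixE // eqn0Ngt hp orbC.
Qed.

(* A swap permutation of P_[0,i) carrying it onto T_[j-i, j), as a function on
   nat rather than a {perm 'I_i}, so that i can vary along an induction. *)
Record swap_witness (i j : nat) (f : nat -> nat) : Prop := SwapWitness {
  swap_witness_lt : forall k, k < i -> f k < i;
  swap_witness_invol : forall k, k < i -> f (f k) = k;
  swap_witness_adj : forall k, k < i -> f k \in [:: k.-1; k; k.+1];
  swap_witness_neq : forall k, k < i -> f k != k -> PP (f k) != PP k;
  swap_witness_text : forall k, k < i -> PP (f k) = TT (j - i + k) }.

Lemma swap_prefix_leq i j : swap_prefix i j -> i <= j.
Proof.
elim/ltn_ind: i j => [[|i]] IH j //= /orP [/andP [/andP [hj _] H]|].
  by have := IH i (ltnSn _) _ H; lia.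
case: i IH => [|i] IH //= /andP [/andP [/andP [hj _] _] H].
by have := IH i (ltnW (ltnSn _)) _ H; lia.
Qed.

Lemma swap_witness0 j : swap_witness 0 j id.
Proof. by split=> k; rewrite ltn0. Qed.

Lemma swap_witness_fix i j f : swap_witness i j f -> i <= j -> PP i = TT j ->
  swap_witness i.+1 j.+1 (fun k => if k == i then i else f k).
Proof.
case=> f_lt f_invol f_adj f_neq f_text hij e; split=> k hk.
- by case: eqP => // /eqP ne; have := f_lt k; lia.
- case: (eqVneq k i) => [->|ne]; rewrite ?eqxx //.
  have hk' : k < i by lia.
  by rewrite (ltn_eqF (f_lt k hk')) f_invol.
- case: (eqVneq k i) => [->|ne]; first by rewrite !inE eqxx orbT.
  by apply: f_adj; lia.
- case: (eqVneq k i) => [->|ne]; first by rewrite eqxx.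
  by apply: f_neq; lia.
- case: (eqVneq k i) => [->|ne]; first by rewrite e; congr nth; lia.
  by rewrite f_text; [congr nth|]; lia.
Qed.

Lemma swap_witness_swap i j f : swap_witness i j f -> i <= j ->
  PP i = TT j.+1 -> PP i.+1 = TT j -> PP i != PP i.+1 ->
  swap_witness i.+2 j.+2
    (fun k => if k == i then i.+1 else if k == i.+1 then i else f k).
Proof.
case=> f_lt f_invol f_adj f_neq f_text hij e1 e2 ne; split=> k hk.
- case: eqP => [_|nei]; first by [].
  case: eqP => [_|nei1]; first by lia.
  by have := f_lt k; lia.
- case: (eqVneq k i) => [->|nei]; first by rewrite eqxx gtn_eqF.
  case: (eqVneq k i.+1) => [->|nei1]; first by rewrite eqxx.
  have hk' : k < i by lia.
  have hf := f_lt k hk'.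
  by rewrite (ltn_eqF hf) (ltn_eqF (leqW hf)) f_invol.
- case: (eqVneq k i) => [->|nei]; first by rewrite !inE eqxx !orbT.
  case: (eqVneq k i.+1) => [->|nei1]; first by rewrite !inE eqxx.
  by apply: f_adj; lia.
- case: (eqVneq k i) => [->|nei]; first by rewrite eq_sym in ne.
  case: (eqVneq k i.+1) => [->|nei1]; first by [].
  by apply: f_neq; lia.
- case: (eqVneq k i) => [->|nei]; first by rewrite e2; congr nth; lia.
  case: (eqVneq k i.+1) => [->|nei1]; first by rewrite e1; congr nth; lia.
  by rewrite f_text; [congr nth|]; lia.
Qed.

Lemma swap_witness_of_prefix i j : swap_prefix i j -> exists f, swap_witness i j f.
Proof.
elim/ltn_ind: i j => i IH j H; have hij := swap_prefix_leq H.
case: i IH H hij => [|i] IH H hij; first by exists id; exact: swap_witness0.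
case: j H hij => [|j] //= /orP [/andP [/eqP e H] hij|].
  have [f w] := IH i (ltnSn _) _ H.
  by exists (fun k => if k == i then i else f k); apply: swap_witness_fix.
case: i IH => [|i] IH //; case: j => [|j] //= /andP [/andP [/eqP e1 /eqP e2] H] _.
have [f w] := IH i (ltnW (ltnSn _)) _ H; have hij := swap_prefix_leq H.
case: (eqVneq (PP i) (PP i.+1)) => [eq|ne].
  (* equal neighbours may not be swapped, but then both stay in place *)
  exists (fun k => if k == i.+1 then i.+1 else if k == i then i else f k).
  apply: swap_witness_fix; [exact: swap_witness_fix w hij (etrans eq e2)|lia|by rewrite -eq].
exists (fun k => if k == i then i.+1 else if k == i.+1 then i else f k).
exact: swap_witness_swap.
Qed.

Lemma swap_witness_restrict i n j f : swap_witness (i + n) (j + n) f ->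
  (forall k, k < i -> f k < i) -> swap_witness i j f.
Proof.
case=> _ f_invol f_adj f_neq f_text f_lt; split=> // k hk.
- by apply: f_invol; lia.
- by apply: f_adj; lia.
- by apply: f_neq; lia.
- by rewrite f_text ?subnDr //; lia.
Qed.

Lemma swap_witness_unfix i j f : swap_witness i.+1 j.+1 f -> i <= j -> f i = i ->
  swap_witness i j f /\ PP i = TT j.
Proof.
move=> w hij fi; have [f_lt f_invol _ _ f_text] := w; split.
  apply: (@swap_witness_restrict i 1); rewrite ?addn1 // => k hk.
  have := f_lt k (ltnW hk); have := f_invol k (ltnW hk).
  by case: (eqVneq (f k) i) => [->|]; [rewrite fi|]; lia.
by rewrite -{1}fi f_text //; congr nth; lia.
Qed.

Lemma swap_witness_unswap i j f : swap_witness i.+2 j.+2 f -> i <= j -> f i.+1 = i ->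
  [/\ swap_witness i j f, PP i = TT j.+1 & PP i.+1 = TT j].
Proof.
move=> w hij fi; have [f_lt f_invol _ _ f_text] := w.
have fi' : f i = i.+1 by rewrite -{1}fi f_invol.
split; last 2 first.
- by rewrite -{1}fi f_text //; congr nth; lia.
- by rewrite -{1}fi' f_text //; congr nth; lia.
apply: (@swap_witness_restrict i 2); rewrite ?addn2 // => k hk.
have := f_lt k (leqW (ltnW hk)); have := f_invol k (leqW (ltnW hk)).
case: (eqVneq (f k) i) => [->|]; first by rewrite fi'; lia.
by case: (eqVneq (f k) i.+1) => [->|]; [rewrite fi|]; lia.
Qed.

Lemma swap_prefix_of_witness i j f : swap_witness i j f -> i <= j -> swap_prefix i j.
Proof.
elim/ltn_ind: i j => i IH j w hij.
case: i IH w hij => [|i] IH w hij //; case: j w hij => [|j] w hij //.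
have : f i = i \/ 0 < i /\ f i = i.-1.
  move: (swap_witness_lt w (ltnSn i)) (swap_witness_adj w (ltnSn i)).
  by rewrite !inE => ? /or3P [/eqP|/eqP|/eqP]; lia.
case=> [fi|[]].
  have [w' e] := swap_witness_unfix w hij fi.
  exact: swap_prefix_fixed e (IH i (ltnSn i) j w' hij).
case: i IH w hij => [|i] IH w hij //= _ fi; case: j w hij => [|j] w hij //.
have [w' e1 e2] := swap_witness_unswap w hij fi.
by apply: swap_prefix_swapped e1 e2 (IH i (ltnW (ltnSn i)) j w' _); lia.
Qed.

Lemma symE (k : 'I_p) : sym k = PP k.
Proof. by rewrite /sym (tnth_nth x0). Qed.

Lemma nth_swapped (pi : {perm 'I_p}) k (hk : k < p) :
  nth x0 (swapped pi) k = PP (pi (Ordinal hk)).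
Proof.
rewrite /swapped (nth_map (Ordinal hk)) ?size_enum_ord // symE.
by congr (nth _ _ (nat_of_ord (pi _))); apply: val_inj; rewrite /= nth_enum_ord.
Qed.

Lemma nth_window j k : k < p -> nth x0 (take p (drop (j - p) T)) k = TT (j - p + k).
Proof. by move=> hk; rewrite nth_take // nth_drop. Qed.

Lemma swap_perm_of_witness j f : p <= j -> j <= size T -> swap_witness p j f ->
  exists pi : {perm 'I_p}, is_swap_perm pi /\ swapped pi = take p (drop (j - p) T).
Proof.
move=> hpj hjT [f_lt f_invol f_adj f_neq f_text].
pose g (k : 'I_p) : 'I_p := Ordinal (f_lt k (ltn_ord k)).
have g_inj : injective g.
  by move=> a b /(congr1 val) /= e; apply: val_inj; rewrite /= -(f_invol a) // e f_invol.
exists (perm g_inj); split; first split.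
- by move=> k; apply: val_inj; rewrite !permE /= f_invol.
- split=> k; rewrite ?symE permE /=; [exact: f_adj | exact: f_neq].
apply: (@eq_from_nth _ x0).
  by rewrite size_map size_enum_ord size_takel // size_drop; lia.
rewrite size_map size_enum_ord => k hk.
by rewrite nth_swapped nth_window // permE /= f_text.
Qed.

Lemma swap_witness_of_perm j (pi : {perm 'I_p}) : is_swap_perm pi ->
  swapped pi = take p (drop (j - p) T) -> exists f, swap_witness p j f.
Proof.
move=> [pi_invol [pi_adj pi_neq]] e.
pose f k := if insub k is Some o then nat_of_ord (pi o) else k.
have f_ord (o : 'I_p) : f o = pi o by rewrite /f valK.
exists f; split=> k hk; rewrite (f_ord (Ordinal hk)).
- exact: ltn_ord.
- by rewrite f_ord pi_invol.
- exact: pi_adj.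
- move=> h; have := pi_neq (Ordinal hk); rewrite !symE; apply.
  by apply: contra h => /eqP ->.
- by rewrite -nth_swapped e nth_window.
Qed.

Lemma swap_prefix_swap_matches j : j <= size T ->
  swap_prefix p j <-> p <= j /\ swap_matches P T (j - p + 1).
Proof.
move=> hjT; rewrite /swap_matches addn1 /=.
split=> [H | [hpj [_ [_ [pi [pi_swap e]]]]]].
- have hpj := swap_prefix_leq H; have [f w] := swap_witness_of_prefix H.
  by do !split; [|lia|exact: swap_perm_of_witness w].
- have [f w] := swap_witness_of_perm pi_swap e.
  exact: swap_prefix_of_witness w hpj.
Qed.

End SwapMatching.

Theorem mainTheorem3 (Sigma : finType) (P T : seq Sigma) (j : nat) :
  0 < size P -> 1 <= j <= size T ->
  ((RU P T j (size P) || RM P T j (size P)) = true <->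
   (size P <= j /\ swap_matches P T (j - size P + 1))).
Proof.
case: P => [//|x0 P'] hp /andP [_ hjT].
rewrite (gsm_report_swap_prefix x0 hp hjT).
exact: swap_prefix_swap_matches.
Qed.
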